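(* Let $n\ge 2k\ge 2$ and $i\in\{0,1,\ldots,k-1\}$. If the generalized Johnson graph $J(n,k,i)$ admits perfect state transfer, then $n=2k$.
   Context: For integers $n\ge 2k$ and $0\le i\le k$, $J(n,k,i)$ is the graph whose vertices are the $k$-subsets of $\{1,\ldots,n\}$, with $A\sim B$ iff $|A\cap B|=i$. For a simple graph $X$ with adjacency matrix $A$, let $\mathcal{H}_X(t)=e^{itA}$. $X$ admits perfect state transfer (PST) from a vertex $u$ to a vertex $v\neq u$ at time $\tau>0$ if $|\mathcal{H}_X(\tau)_{u,v}|=1$; $X$ admits PST if this happens for some $u\ne v$ and some $\tau>0$. *)

From Stdlib Require Import Reals.
From mathcomp Require Import all_boot.

Set Implicit Arguments.
Unset Strict Implicit.
Unset Printing Implicit Defensive.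

Definition jvert (n k : nat) := {A : {set 'I_n} | #|A| == k}.

Definition jadj (n k i : nat) (A B : jvert n k) : bool :=
  #|(val A) :&: (val B)| == i.

(* walks m u v = (A^m)_{u,v}, A the adjacency matrix of J(n,k,i). *)
Fixpoint walks (n k i m : nat) (u v : jvert n k) : nat :=
  match m with
  | 0 => (u == v) : nat
  | m'.+1 => \sum_(w : jvert n k | jadj i u w) walks i m' w v
  end.

Local Open Scope R_scope.

(* e^{itA}_{u,v} = sum_m (it)^m/m! (A^m)_{u,v}; real part re, imag part im. *)
Definition re_term (n k i : nat) (t : R) (u v : jvert n k) (m : nat) : R :=
  (-1) ^ m * t ^ (2 * m)%N / INR ((2 * m)%N `!) * INR (walks i (2 * m) u v).

Definition im_term (n k i : nat) (t : R) (u v : jvert n k) (m : nat) : R :=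
  (-1) ^ m * t ^ (2 * m + 1)%N / INR ((2 * m + 1)%N `!)
  * INR (walks i (2 * m + 1) u v).

Definition abs_H_eq1 (n k i : nat) (t : R) (u v : jvert n k) : Prop :=
  exists re im : R,
    infinite_sum (re_term i t u v) re /\
    infinite_sum (im_term i t u v) im /\
    sqrt (re ^ 2 + im ^ 2) = 1.

Definition PST_from_to (n k i : nat) (u v : jvert n k) (tau : R) : Prop :=
  u <> v /\ 0 < tau /\ abs_H_eq1 i tau u v.

Definition admits_PST (n k i : nat) : Prop :=
  exists (u v : jvert n k) (tau : R), PST_from_to i u v tau.

(* If n > 2k, take x in v \ u and y outside u ∪ v.  The transposition (x y) of
   the ground set is an automorphism of J(n,k,i) fixing u and moving v to some
   w <> v, so walk counts from u to v and to w agree, hence so do the entries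
   H(t)_{u,v} and H(t)_{u,w}.  Perfect state transfer from u to v would give
   two entries of modulus one in row u of the unitary matrix H(t).
   Unitarity is read off the power series: Re H = cos(tA) and Im H = sin(tA),
   and the Cauchy squares of the row entries telescope, the N-th partial sum
   being 1 - c_{N+1} with c_{N+1} >= 0 for N odd; so the row has norm <= 1. *)

From Stdlib Require Import Reals Lia.
From Coquelicot Require Import Coquelicot.
From mathcomp Require Import all_boot perm ssralg ssrnum zify Rstruct ring lra.

Set Implicit Arguments.
Unset Strict Implicit.
Unset Printing Implicit Defensive.

Import GRing.Theory Num.Theory.

Section Walks.
Local Open Scope nat_scope.
Variables n k i : nat.
Implicit Types u v w : jvert n k.

Lemma walksD p q u v : walks i (p + q) u v = \sum_w walks i p u w * walks i q w v.
Proof.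
elim: p u => [|p IHp] u.
  rewrite (bigD1 u) //= eqxx mul1n big1 ?addn0 // => w wu.
  by rewrite eq_sym (negbTE wu).
rewrite addSn /= (eq_bigr _ (fun w _ => IHp w)) exchange_big /=.
by apply: eq_bigr => w _; rewrite big_distrl.
Qed.

Lemma walks1 u v : walks i 1 u v = jadj i u v.
Proof.
rewrite /=; case: (boolP (jadj i u v)) => uv.
  by rewrite (bigD1 v) //= eqxx big1 // => w /andP[_ /negbTE->].
by rewrite big1 // => w uw; case: eqP => // wv; rewrite -wv uw in uv.
Qed.

Lemma jadjC u v : jadj i u v = jadj i v u.
Proof. by rewrite /jadj setIC. Qed.

Lemma walksC m u v : walks i m u v = walks i m v u.
Proof.
elim: m u v => [|m IHm] u v; first by rewrite /= eq_sym.
rewrite -[in LHS](addn1 m) -(add1n m) !walksD.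
by apply: eq_bigr => w _; rewrite !walks1 jadjC IHm mulnC.
Qed.

Lemma walks_le_expn m u v : walks i m u v <= #|{: jvert n k}| ^ m.
Proof.
elim: m u => [|m IHm] u /=; first by case: (u == v).
rewrite expnS; apply: (@leq_trans (\sum_(w | jadj i u w) #|{: jvert n k}| ^ m)).
  exact: leq_sum.
by rewrite sum_nat_const leq_mul2r max_card orbT.
Qed.

End Walks.

Section Relabelling.
Local Open Scope nat_scope.
Variables n k i : nat.
Implicit Types (s : {perm 'I_n}) (u v w : jvert n k).

Lemma card_perm_imset s u : #|s @: val u| == k.
Proof. by rewrite card_imset ?(valP u) //; exact: perm_inj. Qed.

Definition jvert_perm s u : jvert n k := exist _ (s @: val u) (card_perm_imset s u).

Lemma jvert_perm_inj s : injective (jvert_perm s).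
Proof. by move=> u v /(congr1 val) /(imset_inj (@perm_inj _ s)) /val_inj. Qed.

Lemma jvert_perm_id s u : {in val u, s =1 id} -> jvert_perm s u = u.
Proof. by move=> su; apply: val_inj; rewrite /= (eq_in_imset su) imset_id. Qed.

Lemma jadj_perm s u v : jadj i (jvert_perm s u) (jvert_perm s v) = jadj i u v.
Proof.
rewrite /jadj /= -imsetI ?card_imset //; first exact: perm_inj.
by move=> ? ? _ _ /perm_inj.
Qed.

Lemma walks_perm s m u v :
  walks i m (jvert_perm s u) (jvert_perm s v) = walks i m u v.
Proof.
elim: m u => [|m IHm] u /=; first by rewrite (inj_eq (@jvert_perm_inj s)).
rewrite (reindex_inj (@jvert_perm_inj s)) /=.
by apply: eq_big => w; rewrite ?jadj_perm ?IHm.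
Qed.

Lemma twin_vertex u v : 2 * k < n -> u != v ->
  exists2 w, w != v & forall m, walks i m u w = walks i m u v.
Proof.
move=> kn uv; have cu := eqP (valP u); have cv := eqP (valP v).
have [x] : exists x, x \in val v :\: val u.
  apply/set0Pn; apply: contra uv; rewrite setD_eq0 => vu.
  by rewrite eq_sym -val_eqE eqEcard vu cu cv /=.
rewrite inE => /andP[xu xv].
have [y] : exists y, y \in ~: (val u :|: val v).
  apply/card_gt0P; rewrite -(ltn_add2l #|val u :|: val v|) addn0 cardsC card_ord.
  by apply: leq_ltn_trans (leq_card_setU _ _) _; rewrite cu cv addnn -mul2n.
rewrite !inE negb_or => /andP[yu yv].
exists (jvert_perm (tperm x y) v).
  by apply: contra yv => /eqP <-; apply/imsetP; exists x; rewrite ?tpermL.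
have fix_u : jvert_perm (tperm x y) u = u.
  apply: jvert_perm_id => z zu.
  by apply: tpermD; [move: xu | move: yu]; apply: contraNneq => ->.
by move=> m; rewrite -{1}fix_u walks_perm.
Qed.

End Relabelling.

Section Binomial.
Local Open Scope nat_scope.

Lemma sum_nat_pairs (f : nat -> nat) M :
  \sum_(0 <= j < 2 * M) f j = \sum_(0 <= j < M) (f (2 * j) + f (2 * j + 1)).
Proof.
elim: M => [|M IHM]; first by rewrite muln0 !big_geq.
rewrite [RHS]big_nat_recr //= -IHM mulnS addnC addn2 !big_nat_recr //=.
by rewrite addn1 addnA.
Qed.

Lemma sum_bin_odd_even N :
  \sum_(0 <= j < N.+1) 'C(2 * N + 2, 2 * j + 1) =
  \sum_(0 <= j < N.+2) 'C(2 * N + 2, 2 * j).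
Proof.
have E : 2 * N + 2 = (2 * N + 1).+1 by lia.
have -> : \sum_(0 <= j < N.+1) 'C(2 * N + 2, 2 * j + 1) =
          \sum_(0 <= j < 2 * N.+1) 'C(2 * N + 1, j).
  by rewrite sum_nat_pairs; apply: eq_big_nat => j _; rewrite E !addn1 binS addnC.
rewrite big_nat_recl // bin0.
have -> : \sum_(0 <= j < N.+1) 'C(2 * N + 2, 2 * j.+1) =
          \sum_(0 <= j < 2 * N.+1) 'C(2 * N + 1, j.+1).
  rewrite sum_nat_pairs; apply: eq_big_nat => j _.
  by rewrite (_ : 2 * j.+1 = (2 * j + 1).+1) ?E ?binS ?addn1 1?addnC //; lia.
rewrite (_ : 2 * N.+1 = (2 * N + 1).+1); last by lia.
by rewrite big_nat_recl // bin0 [in RHS]big_nat_recr // bin_small ?addn0 //= addn0.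
Qed.

End Binomial.

Section Convergence.
Local Open Scope R_scope.

Lemma is_series_0 : is_series (fun _ => 0) 0.
Proof.
apply/is_series_Reals => eps eps_gt0; exists 0%N => N _.
by rewrite sum_f_R0E big1 // /R_dist Rminus_0_r Rabs_R0.
Qed.

Lemma is_series_big (T : Type) (r : seq T) (F : T -> nat -> R) (L : T -> R) :
  (forall w, is_series (F w) (L w)) ->
  is_series (fun N => (\sum_(w <- r) F w N)%R) (\sum_(w <- r) L w)%R.
Proof.
move=> FL; elim: r => [|a r IHr].
  by rewrite big_nil; apply: is_series_ext is_series_0 => N; rewrite big_nil.
rewrite big_cons; apply: is_series_ext (is_series_plus _ _ _ _ (FL a) IHr) => N.
by rewrite big_cons.
Qed.

Lemma ex_series_Rabs_le_exp (c : nat -> R) (x K : R) :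
  (forall m, Rabs (c m) <= K * (x ^ m / INR m`!)) -> ex_series (fun m => Rabs (c m)).
Proof.
move=> c_le; apply: (ex_series_le _ (fun m => K * (x ^ m / INR m`!))).
  by move=> m; rewrite /norm /= /abs /= Rabs_Rabsolu.
apply: ex_series_scal; have [l /is_series_Reals xl] := exist_exp x; exists l.
by apply: is_series_ext xl => m; rewrite factE Rmult_comm.
Qed.

Lemma Rabs_series_term_le (s t W D : R) p m : Rabs s = 1 -> 0 <= W <= D ^ p ->
  (m <= p)%N -> Rabs (s * t ^ p / INR p`! * W) <= (Rabs t * D) ^ p / INR m`!.
Proof.
move=> s1 [/RleP W0 /RleP WD] mp; apply/RleP; rewrite !RealsE in s1 WD W0 *.
rewrite !normrM s1 mul1r normrX normfV (ger0_norm W0) normr_nat exprMn.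
rewrite mulrAC -!mulrA ler_wpM2l ?exprn_ge0 ?normr_ge0 //.
rewrite ler_pM ?invr_ge0 ?ler0n // lef_pV2 ?posrE ?ltr0n ?fact_gt0 //.
by rewrite ler_nat leq_fact.
Qed.

End Convergence.

Section ExpSeries.
Local Open Scope R_scope.
Variables (n k i : nat) (t : R) (u v : jvert n k).

Let D := INR #|{: jvert n k}|.

Lemma INR_walks_le m : 0 <= INR (walks i m u v) <= D ^ m.
Proof.
split; first exact: pos_INR.
by apply/RleP; rewrite /D !RealsE -natrX ler_nat walks_le_expn.
Qed.

Lemma ex_series_Rabs_re_term : ex_series (fun m => Rabs (re_term i t u v m)).
Proof.
apply: (@ex_series_Rabs_le_exp _ ((Rabs t * D) ^ 2) 1) => m.
rewrite Rmult_1_l -pow_mult; apply: Rabs_series_term_le (INR_walks_le _) _.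
  by rewrite pow_1_abs.
by rewrite leq_pmull.
Qed.

Lemma ex_series_Rabs_im_term : ex_series (fun m => Rabs (im_term i t u v m)).
Proof.
apply: (@ex_series_Rabs_le_exp _ ((Rabs t * D) ^ 2) (Rabs t * D)) => m.
have -> : Rabs t * D * (((Rabs t * D) ^ 2) ^ m / INR m`!) =
          (Rabs t * D) ^ (2 * m + 1)%N / INR m`!.
  by rewrite !RealsE exprD exprM expr1; ring.
apply: Rabs_series_term_le (INR_walks_le _) _.
  by rewrite pow_1_abs.
by rewrite addn1 leqW // leq_pmull.
Qed.

End ExpSeries.

Section CauchySquare.
Local Open Scope ring_scope.

Context {F : numFieldType}.

(* (-1)^N alpha N and (-1)^N beta N are the coefficients of x^(2N) in cos^2 x
   and of x^(2N+2) in sin^2 x; beta_alpha is their cancellation in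
   cos^2 + sin^2. *)
Definition alpha N : F :=
  \sum_(0 <= j < N.+1) (((2 * j)`!)%:R * ((2 * (N - j))`!)%:R)^-1.

Definition beta N : F :=
  \sum_(0 <= j < N.+1) (((2 * j + 1)`!)%:R * ((2 * (N - j) + 1)`!)%:R)^-1.

Lemma inv_fact_mul a b :
  ((a`!)%:R * (b`!)%:R)^-1 = 'C(a + b, a)%:R / ((a + b)`!)%:R :> F.
Proof.
have := bin_fact (leq_addr b a); rewrite addKn => <-.
rewrite [in RHS]natrM [in RHS]invfM mulrA divff ?mul1r ?natrM //.
by rewrite pnatr_eq0 -lt0n bin_gt0 leq_addr.
Qed.

Lemma beta_alpha N : beta N = alpha N.+1.
Proof.
rewrite /beta /alpha.
transitivity (\sum_(0 <= j < N.+1) 'C(2 * N + 2, 2 * j + 1)%:R / ((2 * N + 2)`!)%:R : F).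
  apply: eq_big_nat => j /andP[_ jN]; rewrite inv_fact_mul.
  by have -> : (2 * j + 1 + (2 * (N - j) + 1) = 2 * N + 2)%N by lia.
transitivity (\sum_(0 <= j < N.+2) 'C(2 * N + 2, 2 * j)%:R / ((2 * N + 2)`!)%:R : F).
  by rewrite -!big_distrl /= -!natr_sum sum_bin_odd_even.
apply: eq_big_nat => j /andP[_ jN]; rewrite inv_fact_mul.
by have -> : (2 * j + 2 * (N.+1 - j) = 2 * N + 2)%N by lia.
Qed.

End CauchySquare.

Section CauchyProduct.
Local Open Scope ring_scope.
Variables (n k i : nat) (t : R) (u : jvert n k).

Definition cos2_coef N :=
  (-1) ^+ N * t ^+ (2 * N) * (walks i (2 * N) u u)%:R * alpha N.

Lemma re_termE v m : re_term i t u v m =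
  (-1) ^+ m * t ^+ (2 * m) / ((2 * m)`!)%:R * (walks i (2 * m) u v)%:R.
Proof. by rewrite /re_term !RealsE. Qed.

Lemma im_termE v m : im_term i t u v m =
  (-1) ^+ m * t ^+ (2 * m + 1) / ((2 * m + 1)`!)%:R * (walks i (2 * m + 1) u v)%:R.
Proof. by rewrite /im_term !RealsE. Qed.

Lemma walks_diag_split (S : pzSemiRingType) p q :
  (walks i (p + q) u u)%:R = \sum_v (walks i p u v)%:R * (walks i q u v)%:R :> S.
Proof.
by rewrite walksD natr_sum; apply: eq_bigr => v _; rewrite natrM (walksC _ _ v).
Qed.

Lemma cauchy_re_term N :
  \sum_v sum_f_R0 (fun j => re_term i t u v j * re_term i t u v (N - j)) N =
  cos2_coef N.
Proof.
under eq_bigr do rewrite sum_f_R0E.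
rewrite exchange_big /cos2_coef /alpha mulr_sumr.
apply: eq_big_nat => j /andP[_ /ltnSE/subnKC <-]; rewrite addKn.
under eq_bigr do rewrite !re_termE.
rewrite mulnDr (exprD _ j) (exprD _ (2 * j)) walks_diag_split mulr_sumr mulr_suml.
by apply: eq_bigr => v _; rewrite invfM; ring.
Qed.

Lemma cauchy_im_term N :
  \sum_v sum_f_R0 (fun j => im_term i t u v j * im_term i t u v (N - j)) N =
  - cos2_coef N.+1.
Proof.
under eq_bigr do rewrite sum_f_R0E.
rewrite exchange_big /cos2_coef -(@beta_alpha R) /beta mulr_sumr -sumrN.
apply: eq_big_nat => j /andP[_ /ltnSE/subnKC <-]; rewrite addKn.
under eq_bigr do rewrite !im_termE.
have -> : (2 * (j + (N - j)).+1 = (2 * j + 1) + (2 * (N - j) + 1))%N by lia.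
rewrite exprS (exprD _ j) (exprD t (2 * j + 1)) walks_diag_split.
rewrite mulr_sumr mulr_suml -sumrN.
by apply: eq_bigr => v _; rewrite invfM; ring.
Qed.

End CauchyProduct.

Section Unitarity.
Local Open Scope ring_scope.
Variables (n k i : nat) (t : R) (u : jvert n k).

Definition ReH v := Series (re_term i t u v).
Definition ImH v := Series (im_term i t u v).

Lemma is_series_ReH v : is_series (re_term i t u v) (ReH v).
Proof. exact/Series_correct/ex_series_Rabs/ex_series_Rabs_re_term. Qed.

Lemma is_series_ImH v : is_series (im_term i t u v) (ImH v).
Proof. exact/Series_correct/ex_series_Rabs/ex_series_Rabs_im_term. Qed.

Lemma cos2_coef0 : cos2_coef i t u 0 = 1.
Proof. by rewrite /cos2_coef /alpha big_nat1 /= eqxx !expr0 mulr1 !mul1r invr1. Qed.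

Lemma cos2_coef_even_ge0 M : 0 <= cos2_coef i t u (2 * M).
Proof.
rewrite /cos2_coef exprM sqrrN !expr1n mul1r !mulr_ge0 ?ler0n //.
  by rewrite exprn_even_ge0 // oddM.
rewrite /alpha sumr_ge0 // => j _.
by rewrite invr_ge0 mulr_ge0 ?ler0n.
Qed.

Lemma is_series_row_norm :
  is_series (fun N => cos2_coef i t u N - cos2_coef i t u N.+1)
            (\sum_v (ReH v ^+ 2 + ImH v ^+ 2)).
Proof.
have cauchy v : is_series
    (fun N => sum_f_R0 (fun j => re_term i t u v j * re_term i t u v (N - j)) N +
              sum_f_R0 (fun j => im_term i t u v j * im_term i t u v (N - j)) N)
    (ReH v ^+ 2 + ImH v ^+ 2).
  rewrite !expr2; apply: is_series_plus; apply: is_series_mult;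
    by [exact: is_series_ReH | exact: is_series_ImH
       | exact: ex_series_Rabs_re_term | exact: ex_series_Rabs_im_term].
apply: is_series_ext (is_series_big (r := index_enum _) cauchy) => N.
by rewrite big_split /= cauchy_re_term cauchy_im_term.
Qed.

Lemma row_norm_le1 : \sum_v (ReH v ^+ 2 + ImH v ^+ 2) <= 1.
Proof.
set c := cos2_coef i t u.
have partial_sum N : sum_n (fun m => c m - c m.+1) N = 1 - c N.+1.
  rewrite sum_n_Reals sum_f_R0E (telescope_sumr_eq (fun m => - c m)) //.
    by rewrite /c cos2_coef0 opprK addrC.
  by move=> m _; rewrite opprK addrC.
have lim_partial : is_lim_seq (sum_n (fun m => c m - c m.+1))
                      (\sum_v (ReH v ^+ 2 + ImH v ^+ 2)) := is_series_row_norm.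
have odd_incr N : ((2 * N).+1 < (2 * N.+1).+1)%coq_nat by apply/ltP; lia.
have odd_partial := is_lim_seq_subseq _ _ _ (eventually_subseq _ odd_incr) lim_partial.
suff /RleP : Rbar_le (\sum_v (ReH v ^+ 2 + ImH v ^+ 2)) (Rbar.Finite 1) by [].
apply: (is_lim_seq_le _ _ _ _ _ odd_partial (is_lim_seq_const _)) => N.
rewrite partial_sum; apply/RleP; rewrite gerBl.
by rewrite (_ : (2 * N).+2 = 2 * N.+1) ?cos2_coef_even_ge0 //; lia.
Qed.

End Unitarity.

Section PerfectStateTransfer.
Local Open Scope ring_scope.
Variables (n k i : nat) (t : R) (u : jvert n k).

Lemma abs_H_eq1E v : abs_H_eq1 i t u v -> ReH i t u v ^+ 2 + ImH i t u v ^+ 2 = 1.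
Proof.
rewrite /ReH /ImH; case=> re [im [/is_series_Reals/is_series_unique ->]].
case=> /is_series_Reals/is_series_unique -> /eqP; rewrite !RealsE => /eqP sqrt1.
by rewrite -[LHS]sqr_sqrtr ?addr_ge0 ?sqr_ge0 // sqrt1 expr1n.
Qed.

Lemma eq_H_walks w v : (forall m, walks i m u w = walks i m u v) ->
  ReH i t u w = ReH i t u v /\ ImH i t u w = ImH i t u v.
Proof.
by move=> same_walks; split; apply: Series_ext => m;
  rewrite /re_term /im_term same_walks.
Qed.

Lemma unit_entry_unique v w : w != v ->
  ReH i t u v ^+ 2 + ImH i t u v ^+ 2 = 1 ->
  ReH i t u w ^+ 2 + ImH i t u w ^+ 2 = 1 -> False.
Proof.
move=> wv unit_v unit_w; have := row_norm_le1 i t u.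
rewrite (bigD1 v) // (bigD1 w) //= unit_v unit_w.
have : 0 <= \sum_(x | (x != v) && (x != w)) (ReH i t u x ^+ 2 + ImH i t u x ^+ 2).
  by rewrite sumr_ge0 // => x _; rewrite addr_ge0 ?sqr_ge0.
lra.
Qed.

End PerfectStateTransfer.

Local Open Scope nat_scope.

Theorem mainTheorem2 (n k i : nat) (hk : 1 <= k) (hn : 2 * k <= n) (hi : i < k) :
  admits_PST n k i -> n = 2 * k.
Proof.
case=> u [v [tau [/eqP uv [_ /abs_H_eq1E unit_v]]]].
case: (ltngtP (2 * k) n) => [lt_2k_n | | //]; last by rewrite ltnNge hn.
have [w wv /(eq_H_walks tau) [ReH_wv ImH_wv]] := twin_vertex i lt_2k_n uv.
by case: (unit_entry_unique wv unit_v); rewrite ReH_wv ImH_wv.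
Qed.
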